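(* Let $t>0$. For all $n_1,\dots,n_k\ge0$, as polynomials in $x$, $$\prod_{j=1}^kU_{n_j}(x,t)=\sum_{\substack{\pi\in NC_{1,2}(n_1,\dots,n_k)\\ si(\pi)=0}}t^{s_2(\pi)}\,U_{s(\pi)}(x,t),$$ and consequently, with $n=\sum n_j$, $$\prod_{j=1}^kU_{n_j}(x,t)=\sum_{m=0}^nt^{(n-m)/2}\,|NC_2(n_1,\dots,n_k,m)|\,U_m(x,t).$$
   Context: The polynomials $U_m(x,t)$ (scaled Chebyshev polynomials of the second kind) are defined by $U_0=1$, $U_{-1}=0$, $xU_m(x,t)=U_{m+1}(x,t)+tU_{m-1}(x,t)$. For $n_1,\dots,n_r\ge0$ with sum $N$, $\mathcal P(n_1,\dots,n_r)$ is the set of partitions of $\{1,\dots,N\}$ no class of which contains two elements of the same consecutive interval when $\{1,\dots,N\}$ is split into consecutive intervals of lengths $n_1,\dots,n_r$. A partition is noncrossing if there are no $i<j<k<l$ with $i\sim k$, $j\sim l$, $i\not\sim j$. $NC_{1,2}(n_1,\dots,n_r)$ (resp. $NC_2(n_1,\dots,n_r)$) is the set of noncrossing $\pi\in\mathcal P(n_1,\dots,n_r)$ all of whose classes have one or two (resp. exactly two) elements. $s(\pi)$ is the number of one-element classes, $s_2(\pi)$ the number of two-element classes. A class $B$ of $\pi$ is inner if there is another class $C$ and $a,b\in C$ with $a<\min B$ and $\max B<b$, outer otherwise; $si(\pi)$ is the number of inner one-element classes. *)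

From HB Require Import structures.
From mathcomp Require Import all_boot all_order all_algebra.
Set Implicit Arguments. Unset Strict Implicit. Unset Printing Implicit Defensive.
Import Order.TTheory GRing.Theory Num.Theory.
Local Open Scope ring_scope.

(* Scaled Chebyshev polynomials of the second kind, as polynomials in x:
   U_0 = 1, U_1 = x, U_{m+2} = x U_{m+1} - t U_m. *)
Fixpoint Upair (R : nzRingType) (t : R) (m : nat) : {poly R} * {poly R} :=
  match m with
  | 0 => (1, 'X)
  | m'.+1 => let p := Upair t m' in (p.2, ('X * p.2 - t%:P * p.1)%R)
  end.
Definition Ucheb (R : nzRingType) (t : R) (m : nat) : {poly R} := (Upair t m).1.

(* The ground set {1..N} is represented by 'I_N = {0..N-1}. It is split into
   consecutive intervals of lengths ns`_0, ..., ns`_(k-1). *)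
Definition same_interval (ns : seq nat) (i j : nat) : bool :=
  [exists r : 'I_(size ns),
     [&& (sumn (take r ns) <= i < sumn (take r.+1 ns))%N
       & (sumn (take r ns) <= j < sumn (take r.+1 ns))%N]].

Definition prel (N : nat) (P : {set {set 'I_N}}) (i j : 'I_N) : bool :=
  [exists B in P, (i \in B) && (j \in B)].

Definition admissible (N : nat) (ns : seq nat) (P : {set {set 'I_N}}) : bool :=
  partition P [set: 'I_N] &&
  [forall B in P, forall i in B, forall j in B,
     (i != j) ==> ~~ same_interval ns i j].

Definition noncrossing (N : nat) (P : {set {set 'I_N}}) : bool :=
  ~~ [exists i : 'I_N, exists j : 'I_N, exists k : 'I_N, exists l : 'I_N,
        [&& (i < j < k)%N, (k < l)%N, prel P i k, prel P j l & ~~ prel P i j]].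

Definition NC12 (N : nat) (ns : seq nat) (P : {set {set 'I_N}}) : bool :=
  [&& admissible ns P, noncrossing P &
      [forall B in P, (#|B| == 1%N) || (#|B| == 2%N)]].

Definition NC2 (N : nat) (ns : seq nat) (P : {set {set 'I_N}}) : bool :=
  [&& admissible ns P, noncrossing P & [forall B in P, #|B| == 2%N]].

Definition s1 (N : nat) (P : {set {set 'I_N}}) : nat := #|[set B in P | #|B| == 1%N]|.
Definition s2 (N : nat) (P : {set {set 'I_N}}) : nat := #|[set B in P | #|B| == 2%N]|.

Definition inner (N : nat) (P : {set {set 'I_N}}) (B : {set 'I_N}) : bool :=
  [exists C in P, (C != B) &&
     [exists a in C, exists b in C, [forall x in B, (a < x < b)%N]]].

Definition si (N : nat) (P : {set {set 'I_N}}) : nat :=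
  #|[set B in P | (#|B| == 1%N) && inner P B]|.

From HB Require Import structures.
From mathcomp Require Import all_boot all_order all_algebra.
From mathcomp Require Import zify.
Import Order.TTheory GRing.Theory Num.Theory.
Set Implicit Arguments. Unset Strict Implicit. Unset Printing Implicit Defensive.

(* A partition into blocks of size one or two is the same as an involution s
   of {0..M-1} (its fixed points are the singletons), and the combinatorial
   conditions become inequalities on s.  Fix ns and let A_k be the sum of
   t^s2 U_s1 over the outer NC12-partitions of ns ++ [:: k].  In such a
   partition the last point M is either a singleton, or it is paired with the
   largest singleton of the rest, which then lies before the last interval;
   removing M is a bijection onto the partitions for k (s1 drops by one),
   resp. onto those for k without singletons in the last interval (s1 grows by
   one).  Since x U_s = U_(s+1) + t U_(s-1), this gives
   A_(k+1) = x A_k - t A_(k-1), hence A_k = A_0 U_k, and the first identity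
   follows by induction on ns.  Iterating the second bijection m times
   identifies NC2(ns ++ [:: m]) with the outer NC12-partitions of ns having m
   singletons, and n - s1 = 2 s2 gives the second identity. *)

Lemma sumn_take_leq (ns : seq nat) r : sumn (take r ns) <= sumn ns.
Proof. by rewrite -{2}(cat_take_drop r ns) sumn_cat leq_addr. Qed.

Lemma same_interval_rcons ns k i j : i < sumn ns + k -> j < sumn ns + k ->
  same_interval (rcons ns k) i j =
  if (i < sumn ns) && (j < sumn ns) then same_interval ns i j
  else (sumn ns <= i) && (sumn ns <= j).
Proof.
move=> hi hj; rewrite /same_interval -cats1.
have take_init r : r <= size ns -> take r (ns ++ [:: k]) = take r ns by exact: takel_cat.
apply/existsP/idP.
  case=> r /andP[/andP[i_ge i_lt] /andP[j_ge j_lt]].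
  have r_le : r <= size ns by rewrite -ltnS (leq_trans (ltn_ord r)) // size_cat addn1.
  case: (ltnP r (size ns)) => hr.
    rewrite !take_init ?(ltnW hr) // in i_ge i_lt j_ge j_lt.
    have le := sumn_take_leq ns r.+1.
    rewrite (leq_trans i_lt le) (leq_trans j_lt le) /=.
    by apply/existsP; exists (Ordinal hr); rewrite i_ge i_lt j_ge j_lt.
  have er : val r = size ns by apply/eqP; rewrite eqn_leq hr r_le.
  rewrite er take_init // take_size in i_ge j_ge.
  by rewrite ltnNge i_ge /= j_ge.
have last_lt : size ns < size (ns ++ [:: k]) by rewrite cats1 size_rcons.
case: ifP => [/andP[iN jN] /existsP[r /andP[/andP[i_ge i_lt] /andP[j_ge j_lt]]]|_ /andP[iN jN]].
  have r_lt : r < size (ns ++ [:: k]) by rewrite cats1 size_rcons ltnS ltnW.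
  exists (Ordinal r_lt) => /=.
  by rewrite !take_init ?(ltn_ord r) ?(ltnW (ltn_ord r)) // i_ge i_lt j_ge j_lt.
exists (Ordinal last_lt) => /=.
rewrite take_init // take_size take_oversize ?cats1 ?size_rcons // sumn_rcons.
by rewrite iN jN hi hj.
Qed.

Lemma same_interval_rcons0 ns i j : i < sumn ns -> j < sumn ns ->
  same_interval (rcons ns 0) i j = same_interval ns i j.
Proof. by move=> hi hj; rewrite same_interval_rcons ?addn0 // hi hj. Qed.

(** * Pair partitions as involutions *)

Section PartnerInvolution.
Variable M : nat.
Implicit Types (P : {set {set 'I_M}}) (s : nat -> nat).

(* The other element of the block of i; i itself if i is a singleton or i >= M. *)
Definition partner P (i : nat) : nat :=
  if insub i is Some x then
    (if [pick y in pblock P x | y != x] is Some y then val y else i)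
  else i.

Definition pair_partition P :=
  partition P [set: 'I_M] && [forall B in P, (#|B| == 1%N) || (#|B| == 2%N)].

Definition involutive_below s := forall i, i < M -> s i < M /\ s (s i) = i.

Lemma pair_partition_cover P (x : 'I_M) : pair_partition P -> x \in cover P.
Proof. by case/andP=> /and3P[/eqP -> _ _] _; rewrite inE. Qed.

Lemma pair_partition_trivI P : pair_partition P -> trivIset P.
Proof. by case/andP=> /and3P[]. Qed.

Lemma partner_ge P i : M <= i -> partner P i = i.
Proof. by move=> hi; rewrite /partner insubF // ltnNge hi. Qed.

Lemma partnerE P (x : 'I_M) :
  partner P x = if [pick y in pblock P x | y != x] is Some y then val y else x.
Proof. by rewrite /partner valK. Qed.

Lemma partner_lt P i : i < M -> partner P i < M.
Proof.
move=> hi; have -> : i = Ordinal hi by [].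
by rewrite partnerE; case: pickP => [z _|_] /=.
Qed.

Lemma mem_pblock_partner P (x y : 'I_M) : pair_partition P ->
  (y \in pblock P x) = (y == x) || (val y == partner P x).
Proof.
move=> pP; have Bx := pblock_mem (pair_partition_cover x pP).
have xB : x \in pblock P x by rewrite mem_pblock pair_partition_cover.
have [->|yx] := eqVneq y x; first by rewrite xB.
rewrite partnerE /=; case: pickP => [z /andP[zB zx] | none]; last first.
  apply/idP/idP => [yB|/eqP/val_inj yxe]; last by rewrite yxe eqxx in yx.
  by have := none y; rewrite yB yx.
apply/idP/idP => [yB|/eqP/val_inj ->//]; apply/negPn/negP => yz.
have : #|x |: (y |: [set z])| <= #|pblock P x|.
  by apply: subset_leq_card; apply/subsetP => w; rewrite !inE => /orP[/eqP->|/orP[]/eqP->].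
rewrite !cardsU1 cards1 !inE (eq_sym x y) (eq_sym x z) (negPf yx) (negPf zx) yz /=.
by case/andP: pP => _ /forallP/(_ (pblock P x)); rewrite Bx /= => /orP[]/eqP->.
Qed.

Lemma prel_partner P (i j : 'I_M) : pair_partition P ->
  prel P i j = (j == i) || (val j == partner P i).
Proof.
move=> pP; rewrite -mem_pblock_partner //.
apply/existsP/idP => [[B /and3P[BP iB jB]]|jB].
  by rewrite (def_pblock (pair_partition_trivI pP) BP iB).
exists (pblock P i); rewrite pblock_mem ?pair_partition_cover // jB andbT.
by rewrite mem_pblock pair_partition_cover.
Qed.

Lemma partner_involutive P : pair_partition P -> involutive_below (partner P).
Proof.
move=> pP i hi; split; first exact: partner_lt.
pose x := Ordinal hi; pose y := Ordinal (partner_lt P hi).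
have yx : y \in pblock P x by rewrite mem_pblock_partner ?eqxx ?orbT.
have : x \in pblock P y.
  rewrite (same_pblock (pair_partition_trivI pP) yx).
  by rewrite mem_pblock pair_partition_cover.
by rewrite mem_pblock_partner // => /orP[/eqP/(congr1 val) /= h|/eqP /= h]; rewrite -!h.
Qed.

Lemma pblock_partner_fix P (x : 'I_M) : pair_partition P ->
  partner P x = x -> pblock P x = [set x].
Proof.
move=> pP h; apply/setP => y; rewrite mem_pblock_partner // h inE.
by case: (y =P x) => [->|ne] //=; apply/eqP => /val_inj.
Qed.

Lemma partner_fix_set1 P (x : 'I_M) : pair_partition P -> [set x] \in P ->
  partner P x = x.
Proof.
move=> pP xP; have lt := partner_lt P (ltn_ord x).
have : Ordinal lt \in pblock P x by rewrite mem_pblock_partner ?eqxx ?orbT.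
rewrite (def_pblock (pair_partition_trivI pP) xP (set11 x)) inE.
by move/eqP/(congr1 val).
Qed.

Definition partner_rel s : rel 'I_M := fun x y => (y == x) || (val y == s x).

Definition partition_of s : {set {set 'I_M}} :=
  equivalence_partition (partner_rel s) [set: 'I_M].

Lemma partner_rel_equiv s : involutive_below s ->
  {in [set: 'I_M] & &, equivalence_rel (partner_rel s)}.
Proof.
move=> hs x y z _ _ _; split; first by rewrite /partner_rel eqxx.
rewrite /partner_rel => /orP[/eqP->//|/eqP hy].
have [_ hss] := hs x (ltn_ord x).
by rewrite -!val_eqE /= hy hss orbC.
Qed.

Lemma mem_pblock_partition_of s (x y : 'I_M) : involutive_below s ->
  (y \in pblock (partition_of s) x) = partner_rel s x y.
Proof.
move=> hs; rewrite (pblock_equivalence_partition (partner_rel_equiv hs)) ?inE //.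
Qed.

Lemma pair_partition_of s : involutive_below s -> pair_partition (partition_of s).
Proof.
move=> hs; apply/andP; split.
  exact/equivalence_partitionP/partner_rel_equiv.
apply/forallP => B; apply/implyP => /imsetP[x _ ->].
have [lt _] := hs x (ltn_ord x).
have [e|ne] := eqVneq (s x) x.
  suff -> : [set y in [set: 'I_M] | partner_rel s x y] = [set x] by rewrite cards1.
  by apply/setP => y; rewrite !inE /partner_rel e val_eqE orbb.
suff -> : [set y in [set: 'I_M] | partner_rel s x y] = [set x; Ordinal lt].
  by rewrite cards2 -val_eqE /= [_ == s x]eq_sym ne orbT.
by apply/setP => y; rewrite !inE /partner_rel -val_eqE.
Qed.

Lemma partner_partition_of s i : involutive_below s -> i < M ->
  partner (partition_of s) i = s i.
Proof.
move=> hs hi; have -> : i = Ordinal hi by [].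
have [lt _] := hs _ hi.
rewrite partnerE; case: pickP => [z|none].
  by rewrite mem_pblock_partition_of // /partner_rel => /andP[/orP[->//|/eqP ->]].
have := none (Ordinal lt); rewrite mem_pblock_partition_of // /partner_rel /= eqxx orbT.
by move=> /negbFE /eqP /(congr1 val).
Qed.

Lemma eq_partition_of s1 s2 : (forall i, i < M -> s1 i = s2 i) ->
  partition_of s1 = partition_of s2.
Proof.
move=> h; apply: eq_imset => x; apply/setP => y.
by rewrite !inE /partner_rel h.
Qed.

Lemma partition_of_partner P : pair_partition P -> partition_of (partner P) = P.
Proof.
move=> pP; have partP : partition P [set: 'I_M] by case/andP: pP.
rewrite -{2}(equivalence_partition_pblock partP); apply: eq_imset => x.
by apply/setP => y; rewrite !inE mem_pblock_partner.
Qed.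

Definition nfix s := (\sum_(i < M) (s i == i))%N.

Lemma s1_nfix P : pair_partition P -> s1 P = nfix (partner P).
Proof.
move=> pP; rewrite /s1 /nfix.
have -> : [set B in P | #|B| == 1%N] =
    [set [set x] | x in [set x : 'I_M | partner P x == x]].
  apply/setP => B; rewrite !inE; apply/andP/imsetP.
    case=> BP /cards1P [x Bx]; exists x => //; rewrite inE; apply/eqP.
    by apply: partner_fix_set1 => //; rewrite -Bx.
  case=> x; rewrite inE => /eqP hx ->; split; last by rewrite cards1.
  by rewrite -(pblock_partner_fix pP hx) pblock_mem ?pair_partition_cover.
rewrite card_imset; last exact: set1_inj.
by rewrite -sum1_card big_mkcond; apply: eq_bigr => x _; rewrite inE; case: eqP.
Qed.

Lemma s1_add_double_s2 P : pair_partition P -> (s1 P + 2 * s2 P)%N = M.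
Proof.
case/andP=> partP /forallP small.
rewrite -[RHS]card_ord -cardsT (card_partition partP).
rewrite (bigID (fun B : {set 'I_M} => #|B| == 1%N)) /=; congr addn.
  by rewrite /s1 -sum1_card; apply: eq_big => [B|B]; rewrite inE // => /andP[_ /eqP].
rewrite /s2 mulnC -sum_nat_const; apply: eq_big => [B|B]; rewrite inE; last first.
  by case/andP=> _ /eqP.
by case BP: (B \in P) => //=; have := small B; rewrite BP /= => /orP[]/eqP ->.
Qed.

End PartnerInvolution.

Section OuterPairPartitions.
Variables (M : nat) (ns : seq nat).
Implicit Types (P : {set {set 'I_M}}) (s : nat -> nat).

Definition inv_admissible s :=
  forall i, i < M -> s i != i -> ~~ same_interval ns i (s i).
Definition inv_noncrossing s :=
  forall i j, i < j -> j < s i -> s i < s j -> s j < M -> False.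
Definition inv_no_inner_fix s :=
  forall x a, a < x -> x < s a -> s a < M -> s x = x -> False.

Definition outer_involution s :=
  [/\ involutive_below M s, inv_admissible s, inv_noncrossing s & inv_no_inner_fix s].

Definition outer_NC12 P := NC12 ns P && (si P == 0%N).

Lemma separated_partner P : pair_partition P ->
  [forall B in P, forall i in B, forall j in B, (i != j) ==> ~~ same_interval ns i j]
  <-> inv_admissible (partner P).
Proof.
move=> pP; split => [/forallP sep i hi ne | adm].
  pose I := Ordinal hi; pose J := Ordinal (partner_lt P hi).
  move/(_ (pblock P I)): sep; rewrite pblock_mem ?pair_partition_cover //.
  move=> /forallP/(_ I); rewrite mem_pblock pair_partition_cover //.
  move=> /forallP/(_ J); rewrite mem_pblock_partner // eqxx orbT /=.
  by move/implyP; apply; rewrite -val_eqE /= eq_sym.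
apply/forallP => B; apply/implyP => BP; apply/forallP => i; apply/implyP => iB.
apply/forallP => j; apply/implyP => jB; apply/implyP => ij.
have : j \in pblock P i by rewrite (def_pblock (pair_partition_trivI pP) BP iB).
rewrite mem_pblock_partner // eq_sym (negPf ij) /= => /eqP hj.
by rewrite hj adm // -hj val_eqE eq_sym.
Qed.

Lemma noncrossing_partner P : pair_partition P ->
  noncrossing P <-> inv_noncrossing (partner P).
Proof.
move=> pP; split => [/negP ncP i j ij jk kl lM | ncr].
  have kM : partner P i < M by apply: ltn_trans lM.
  have jM : j < M by apply: ltn_trans kM.
  have iM : i < M by apply: ltn_trans jM.
  apply: ncP; apply/existsP; exists (Ordinal iM); apply/existsP; exists (Ordinal jM).
  apply/existsP; exists (Ordinal kM); apply/existsP; exists (Ordinal lM).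
  rewrite /= ij jk kl !prel_partner //= !eqxx !orbT /= -val_eqE /= negb_or.
  by rewrite neq_ltn ij orbT neq_ltn jk.
apply/negP => /existsP[i /existsP[j /existsP[k /existsP[l]]]].
case/and5P=> /andP[ij jk] kl pik pjl _.
move: pik pjl; rewrite !prel_partner // -!val_eqE.
rewrite (gtn_eqF (ltn_trans ij jk)) (gtn_eqF (ltn_trans jk kl)) /= => /eqP ki /eqP lj.
by apply: (ncr i j ij); rewrite -?ki -?lj.
Qed.

Lemma si_eq0_partner P : pair_partition P ->
  si P = 0%N <-> inv_no_inner_fix (partner P).
Proof.
move=> pP; rewrite /si; split => [si0 x a ax xb bM fx | nsi].
  have xM : x < M by apply: ltn_trans bM.
  have aM : a < M by apply: ltn_trans ax xM.
  pose X := Ordinal xM; pose A := Ordinal aM; pose Bo := Ordinal bM.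
  move/eqP: si0; apply/negP; rewrite cards_eq0; apply/set0Pn.
  exists [set X]; rewrite inE cards1 eqxx /=; apply/andP; split.
    by rewrite -(pblock_partner_fix (x := X) pP fx) pblock_mem ?pair_partition_cover.
  apply/existsP; exists (pblock P A); rewrite pblock_mem ?pair_partition_cover //=.
  apply/andP; split.
    apply/eqP => e; have : A \in pblock P A by rewrite mem_pblock pair_partition_cover.
    by rewrite e inE -val_eqE /= => /eqP h; rewrite h ltnn in ax.
  apply/existsP; exists A; rewrite mem_pblock pair_partition_cover //=.
  apply/existsP; exists Bo; rewrite mem_pblock_partner // eqxx orbT /=.
  by apply/forallP => y; apply/implyP; rewrite inE => /eqP ->; rewrite /= ax xb.
apply/eqP; rewrite cards_eq0; apply/eqP/setP => B; rewrite !inE.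
apply/negP => /and3P[BP /cards1P[x Bx] /existsP[C /and3P[CP _]]].
case/existsP=> a /andP[aC /existsP[b /andP[bC /forallP/(_ x)]]].
rewrite Bx inE eqxx /= => /andP[ax xb].
have fx : partner P x = x by apply: partner_fix_set1 => //; rewrite -Bx.
have : b \in pblock P a by rewrite (def_pblock (pair_partition_trivI pP) CP aC).
rewrite mem_pblock_partner // -val_eqE (gtn_eqF (ltn_trans ax xb)) /= => /eqP hb.
by apply: (nsi x a ax); rewrite -?hb.
Qed.

Lemma outer_NC12_partner P :
  outer_NC12 P <-> pair_partition P /\ outer_involution (partner P).
Proof.
rewrite /outer_NC12 /NC12 /admissible.
split => [/andP[/and3P[/andP[partP sep] ncP small] /eqP si0] | [pP [inv adm ncr nsi]]].
  have pP : pair_partition P by apply/andP.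
  split; [done|split; first exact: partner_involutive].
  - exact/separated_partner.
  - exact/noncrossing_partner.
  - exact/si_eq0_partner.
case/andP: (pP) => partP small.
rewrite partP small /= andbT -andbA; apply/and3P; split.
- exact/separated_partner.
- exact/noncrossing_partner.
- exact/eqP/si_eq0_partner.
Qed.

End OuterPairPartitions.

Lemma eq_outer_involution M ns s s' : (forall i, i < M -> s i = s' i) ->
  outer_involution M ns s -> outer_involution M ns s'.
Proof.
move=> e [inv adm ncr nsi].
split.
- by move=> i hi; have [lt ssi] := inv i hi; rewrite -!e.
- by move=> i hi; rewrite -e //; apply: adm.
- move=> i j ij jsi sisj sjM.
  have jM : j < M by lia.
  have iM : i < M by lia.
  by rewrite -!e // in jsi sisj sjM; apply: (ncr i j ij jsi sisj sjM).
- move=> x a ax xsa saM fx.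
  have xM : x < M by lia.
  have aM : a < M by lia.
  by rewrite -!e // in xsa saM fx; apply: (nsi x a ax xsa saM fx).
Qed.

Lemma outer_NC12_partition_of M ns s : outer_involution M ns s ->
  outer_NC12 ns (partition_of M s).
Proof.
move=> outer_s; have [inv _ _ _] := outer_s.
apply/outer_NC12_partner; split; first exact: pair_partition_of.
by apply: eq_outer_involution outer_s => i hi; rewrite partner_partition_of.
Qed.

Lemma outer_NC12_pair_partition M ns (P : {set {set 'I_M}}) :
  outer_NC12 ns P -> pair_partition P.
Proof. by case/outer_NC12_partner. Qed.

Lemma eq_nfix M s s' : (forall i, i < M -> s i = s' i) -> nfix M s = nfix M s'.
Proof. by move=> e; apply: eq_bigr => i _; rewrite e. Qed.

Lemma nfixS M s : nfix M.+1 s = (nfix M s + (s M == M))%N.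
Proof. by rewrite /nfix big_ord_recr. Qed.

Lemma nfix_gt0 M s p : p < M -> s p = p -> 0 < nfix M s.
Proof. by move=> pM sp; rewrite /nfix (bigD1 (Ordinal pM)) //= sp eqxx. Qed.

Lemma s1_partition_of M s : involutive_below M s -> s1 (partition_of M s) = nfix M s.
Proof.
move=> inv; rewrite s1_nfix; last exact: pair_partition_of.
by apply: eq_nfix => i hi; rewrite partner_partition_of.
Qed.

Definition last_fix M (g : nat -> nat) := (\max_(i < M | g i == i) i)%N.

Lemma last_fix_eq M g p : p < M -> g p = p ->
  (forall x, p < x -> x < M -> g x != x) -> last_fix M g = p.
Proof.
move=> pM gp above; apply/eqP; rewrite eqn_leq; apply/andP; split.
  apply/bigop.bigmax_leqP => i /eqP gi; rewrite leqNgt; apply/negP => pi.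
  by have := above i pi (ltn_ord i); rewrite gi eqxx.
by apply: (bigop.bigmax_sup (Ordinal pM)) => //=; rewrite gp.
Qed.

Lemma last_fixP M g : 0 < nfix M g ->
  [/\ last_fix M g < M, g (last_fix M g) = last_fix M g
    & forall x, last_fix M g < x -> x < M -> g x != x].
Proof.
move=> pos; have [i0 fix_i0] : exists i : 'I_M, g i == i.
  apply/existsP; apply: contraLR pos; rewrite negb_exists => /forallP none.
  by rewrite /nfix big1 // => i _; rewrite (negbTE (none i)).
have : (0 < #|(fun i : 'I_M => g i == i)|)%N by apply/card_gt0P; exists i0.
case/(bigop.eq_bigmax_cond (fun i : 'I_M => val i)) => j; rewrite unfold_in => /eqP gj e.
have lfj : last_fix M g = j by rewrite -e; apply: eq_bigl => i; rewrite unfold_in.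
rewrite lfj; split => // x jx xM; apply: contraTN jx => /eqP gx.
by rewrite -leqNgt -lfj (bigop.bigmax_sup (Ordinal xM)) //= gx.
Qed.

Definition unlink (M : nat) (s : nat -> nat) (i : nat) := if s i < M then s i else i.

Definition link (p M : nat) (s : nat -> nat) (i : nat) :=
  if i == p then M else if i == M then p else s i.

Lemma nfix_link M g p : p < M -> g p = p -> (nfix M.+1 (link p M g)).+1 = nfix M g.
Proof.
move=> pM gp; rewrite nfixS /link eqxx (gtn_eqF pM) /= (ltn_eqF pM) addn0.
rewrite /nfix (bigD1 (Ordinal pM)) //= [in RHS](bigD1 (Ordinal pM)) //= eqxx gp eqxx.
rewrite (gtn_eqF pM) add0n add1n; congr S; apply: eq_bigr => i ip.
by rewrite -val_eqE in ip; rewrite (negbTE ip) (ltn_eqF (ltn_ord i)).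
Qed.

Definition no_singleton_from N M (P : {set {set 'I_M}}) :=
  [forall x : 'I_M, (N <= x) ==> (partner P x != x)].

Lemma singleton_from_s1_gt0 N M (P : {set {set 'I_M}}) : pair_partition P ->
  ~~ no_singleton_from N P -> 0 < s1 P.
Proof.
move=> pP; rewrite negb_forall => /existsP[x]; rewrite negb_imply negbK => /andP[_ /eqP fx].
by rewrite s1_nfix //; apply: (nfix_gt0 (ltn_ord x)).
Qed.

Lemma s2_s1_succ M (P : {set {set 'I_M.+1}}) (g : {set {set 'I_M}}) :
  pair_partition P -> pair_partition g -> s1 P = (s1 g).+1 -> s2 P = s2 g.
Proof. by move=> /s1_add_double_s2 hP /s1_add_double_s2 hg e; rewrite e in hP; lia. Qed.

Lemma s2_s1_pred M (P : {set {set 'I_M.+1}}) (g : {set {set 'I_M}}) :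
  pair_partition P -> pair_partition g -> (s1 P).+1 = s1 g -> s2 P = (s2 g).+1.
Proof. by move=> /s1_add_double_s2 hP /s1_add_double_s2 hg e; rewrite -e in hg; lia. Qed.

(** * Appending a point to the last interval *)

Section AppendPoint.
Variables (ns : seq nat) (k : nat).
Let N := sumn ns.
Let M := (N + k)%N.

Lemma same_interval_grow i j : i < M -> j < M ->
  same_interval (rcons ns k.+1) i j = same_interval (rcons ns k) i j.
Proof.
rewrite /M /N => hi hj.
rewrite !same_interval_rcons //; [lia | lia].
Qed.

Lemma same_interval_new_far p : p < N ->
  same_interval (rcons ns k.+1) p M = false /\ same_interval (rcons ns k.+1) M p = false.
Proof.
rewrite /M /N => hp; rewrite !same_interval_rcons; try lia.
by rewrite [sumn ns + k < _]ltnNge leq_addr andbF /=; split; apply/negbTE; lia.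
Qed.

Lemma same_interval_new_near p : N <= p -> p <= M ->
  same_interval (rcons ns k.+1) M p.
Proof.
rewrite /M /N => h1 h2; rewrite same_interval_rcons; try lia.
by rewrite [sumn ns + k < _]ltnNge leq_addr.
Qed.

Lemma outer_drop_fix s : outer_involution M.+1 (rcons ns k.+1) s -> s M = M ->
  outer_involution M (rcons ns k) s.
Proof.
case=> inv adm ncr nsi sM.
have inv' : involutive_below M s.
  move=> i hi; have [lt ssi] := inv i (ltnW hi); split => //.
  rewrite ltn_neqAle -ltnS lt andbT; apply: contraTneq hi => e.
  by rewrite -ssi e sM ltnn.
split => //.
- move=> i hi ne; have [lt _] := inv' i hi.
  by rewrite -same_interval_grow //; apply: adm => //; apply: ltnW.
- by move=> i j ij jsi sisj sjM; apply: (ncr i j) => //; apply: ltnW.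
- by move=> x a ax xsa saM; apply: (nsi x a) => //; apply: ltnW.
Qed.

Lemma outer_add_fix g : outer_involution M (rcons ns k) g -> g M = M ->
  outer_involution M.+1 (rcons ns k.+1) g.
Proof.
case=> inv adm ncr nsi gM.
have moved_lt i : i < M.+1 -> g i != i -> i < M.
  by rewrite ltnS leq_eqVlt => /orP[/eqP ->|//]; rewrite gM eqxx.
split.
- move=> i; rewrite ltnS leq_eqVlt => /orP[/eqP ->|hi]; first by rewrite !gM.
  by have [lt ggi] := inv i hi; split => //; apply: ltnW.
- move=> i hi ne; have hi' := moved_lt i hi ne; have [lt _] := inv i hi'.
  by rewrite same_interval_grow //; apply: adm.
- move=> i j ij jgi gigj gjM.
  have jM : j < M by rewrite ltnS in gjM; lia.
  by have [lt _] := inv j jM; apply: (ncr i j).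
- move=> x a ax xga gaM gx.
  have aM : a < M by rewrite ltnS in gaM; lia.
  by have [lt _] := inv a aM; apply: (nsi x a).
Qed.

Section RemovePair.
Variable s : nat -> nat.
Hypotheses (outer_s : outer_involution M.+1 (rcons ns k.+1) s) (sM : s M != M).
Let p := s M.

Lemma partner_new_lt : p < N.
Proof.
case: outer_s => inv adm _ _; have [sM_lt _] := inv M (ltnSn M).
rewrite ltnNge; apply: contra (adm M (ltnSn M) sM) => Np.
by rewrite same_interval_new_near // -ltnS.
Qed.

Lemma unlink_partner_new : unlink M s p = p.
Proof.
case: outer_s => inv _ _ _; have [_ ssM] := inv M (ltnSn M).
by rewrite /unlink /p ssM ltnn.
Qed.

Lemma unlinkE i : i < M -> i != p -> unlink M s i = s i.
Proof.
case: outer_s => inv _ _ _ hi ip; have [lt ssi] := inv i (ltnW hi).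
rewrite /unlink ltn_neqAle -ltnS lt andbT.
by case: eqP => // e; move: ip; rewrite /p -e ssi eqxx.
Qed.

Lemma unlink_moved i : i < M -> unlink M s i != i -> i != p /\ unlink M s i = s i.
Proof.
move=> hi; have [->|ip] := eqVneq i p; first by rewrite unlink_partner_new eqxx.
by split => //; apply: unlinkE.
Qed.

Lemma unlink_no_fix_above x : p < x -> x < M -> unlink M s x != x.
Proof.
case: outer_s => inv _ _ nsi px xM; apply/eqP => e.
have [_ ssM] := inv M (ltnSn M).
by apply: (nsi x p px); rewrite ?ssM // -(unlinkE xM) // neq_ltn px orbT.
Qed.

Lemma outer_unlink : outer_involution M (rcons ns k) (unlink M s).
Proof.
case: (outer_s) => inv adm ncr nsi; have [_ ssM] := inv M (ltnSn M).
split.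
- move=> i hi; have [->|ip] := eqVneq i p.
    by rewrite !unlink_partner_new (leq_trans partner_new_lt) ?leq_addr.
  have [lt ssi] := inv i (ltnW hi).
  have sip : s i != p by apply: contraTneq hi => e; rewrite -ssi e /p ssM ltnn.
  have siM : s i < M by rewrite -(unlinkE hi ip) /unlink; case: ifP.
  by rewrite unlinkE // unlinkE // ssi.
- move=> i hi ne; have [ip ->] := unlink_moved hi ne; rewrite (unlinkE hi ip) in ne.
  have siM : s i < M by rewrite -(unlinkE hi ip) /unlink; case: ifP.
  by rewrite -same_interval_grow //; apply: adm => //; apply: ltnW.
- move=> i j ij jsi sisj sjM.
  have jM : j < M by lia.
  have iM : i < M by lia.
  have [ip ei] : i != p /\ unlink M s i = s i.
    by apply: unlink_moved iM _; apply/eqP => e; rewrite e in jsi; lia.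
  have [jp ej] : j != p /\ unlink M s j = s j.
    by apply: unlink_moved jM _; apply/eqP => e; rewrite e in sisj; lia.
  rewrite ei ej in jsi sisj sjM.
  by apply: (ncr i j ij jsi sisj); apply: ltnW.
- move=> x a ax xsa saM fx.
  have xM : x < M by lia.
  have aM : a < M by lia.
  have [ap ea] : a != p /\ unlink M s a = s a.
    by apply: unlink_moved aM _; apply/eqP => e; rewrite e in xsa; lia.
  rewrite ea in xsa saM.
  have [xp|xp] := eqVneq x p.
    by rewrite xp in ax xsa; apply: (ncr a p ax xsa); rewrite ssM.
  by apply: (nsi x a ax xsa); [apply: ltnW | rewrite -(unlinkE xM xp)].
Qed.

End RemovePair.

Section AddPair.
Variables (g : nat -> nat) (p : nat).
Hypotheses (outer_g : outer_involution M (rcons ns k) g) (pN : p < N) (gp : g p = p).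
Hypothesis no_fix_above : forall x, p < x -> x < M -> g x != x.

Let pM : p < M := leq_trans pN (leq_addr _ _).

Lemma link_p : link p M g p = M.
Proof. by rewrite /link eqxx. Qed.

Lemma link_new : link p M g M = p.
Proof. by rewrite /link gtn_eqF // eqxx. Qed.

Lemma linkE i : i < M -> i != p -> link p M g i = g i.
Proof. by move=> hi ip; rewrite /link (negbTE ip) ltn_eqF. Qed.

Lemma partner_old i : i < M -> i != p -> [/\ g i < M, g i != p & g (g i) = i].
Proof.
case: outer_g => inv _ _ _ hi ip; have [lt ggi] := inv i hi; split => //.
by apply: contra_neq ip => e; rewrite -ggi e gp.
Qed.

Lemma outer_link : outer_involution M.+1 (rcons ns k.+1) (link p M g).
Proof.
case: (outer_g) => inv adm ncr nsi; have pltM := pM.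
split.
- move=> i; rewrite ltnS leq_eqVlt => /orP[/eqP ->|hi].
    by rewrite link_new link_p ltnW.
  have [->|ip] := eqVneq i p; first by rewrite link_p link_new.
  have [lt gip ggi] := partner_old hi ip.
  by rewrite !linkE // ggi ltnW.
- move=> i; rewrite ltnS leq_eqVlt => /orP[/eqP ->|hi] ne.
    by rewrite link_new; case: (same_interval_new_far pN) => _ ->.
  have [ip|ip] := eqVneq i p.
    by rewrite ip link_p; case: (same_interval_new_far pN) => -> _.
  have [lt _ _] := partner_old hi ip; rewrite linkE // in ne *.
  by rewrite same_interval_grow //; apply: adm.
- move=> i j ij jli lilj ljM.
  have jM : j < M.
    rewrite ltn_neqAle -ltnS (ltn_trans jli (ltn_trans lilj ljM)) andbT.
    by apply/eqP => ej; rewrite ej link_new in jli lilj; lia.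
  have iM : i < M by apply: ltn_trans ij jM.
  have [ip|ip] := eqVneq i p; first by rewrite ip link_p in lilj; lia.
  rewrite linkE // in jli lilj.
  have [jp|jp] := eqVneq j p.
    rewrite jp in ij jli; have [lt _ _] := partner_old iM ip.
    exact: (nsi p i ij jli lt).
  rewrite linkE // in lilj; have [lt _ _] := partner_old jM jp.
  exact: (ncr i j ij jli lilj lt).
- move=> x a ax xla laM fx.
  have xp : x != p by apply/eqP => ex; rewrite ex link_p in fx; lia.
  have xM : x < M.
    rewrite ltn_neqAle -ltnS (ltn_trans xla laM) andbT.
    by apply/eqP => ex; rewrite ex link_new in fx; lia.
  rewrite linkE // in fx.
  have aM : a < M by apply: ltn_trans ax xM.
  have [ap|ap] := eqVneq a p.
    by rewrite ap in ax; have := no_fix_above ax xM; rewrite fx eqxx.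
  rewrite linkE // in xla laM; have [lt _ _] := partner_old aM ap.
  exact: (nsi x a ax xla lt fx).
Qed.

Lemma unlink_link i : i < M -> unlink M (link p M g) i = g i.
Proof.
move=> hi; rewrite /unlink; have [->|ip] := eqVneq i p; first by rewrite link_p ltnn gp.
by have [lt _ _] := partner_old hi ip; rewrite linkE // lt.
Qed.

End AddPair.

Lemma new_fix_iff s : outer_involution M.+1 (rcons ns k.+1) s ->
  (s M == M) = [exists x : 'I_M.+1, (N <= x) && (s x == x)].
Proof.
move=> outer_s; apply/idP/existsP => [/eqP sM|[x /andP[Nx /eqP sx]]].
  by exists ord_max; rewrite /= sM eqxx leq_addr.
apply/negPn/negP => sM.
have pN := partner_new_lt outer_s sM.
have [/eqP xM|xM] := boolP (val x == M); first by rewrite -xM sx eqxx in sM.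
have xltM : x < M by rewrite ltn_neqAle xM -ltnS ltn_ord.
have := unlink_no_fix_above outer_s (leq_trans pN Nx) xltM.
by rewrite unlinkE // ?sx ?eqxx // neq_ltn (leq_trans pN Nx) orbT.
Qed.

Definition add_singleton (g : {set {set 'I_M}}) : {set {set 'I_M.+1}} :=
  partition_of M.+1 (partner g).

(* The only admissible partner of the new point is the largest singleton. *)
Definition add_pair (g : {set {set 'I_M}}) : {set {set 'I_M.+1}} :=
  partition_of M.+1 (link (last_fix M (partner g)) M (partner g)).

Definition drop_last (P : {set {set 'I_M.+1}}) : {set {set 'I_M}} :=
  partition_of M (unlink M (partner P)).

Lemma drop_last_singleton P : outer_NC12 (rcons ns k.+1) P -> partner P M = M ->
  [/\ outer_NC12 (rcons ns k) (drop_last P), add_singleton (drop_last P) = P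
    & s1 P = (s1 (drop_last P)).+1].
Proof.
case/outer_NC12_partner=> pP outer_P PM.
have outer' := outer_drop_fix outer_P PM; have [inv' _ _ _] := outer'.
have unlink_agree i : i < M -> unlink M (partner P) i = partner P i.
  by move=> hi; rewrite /unlink; have [-> _] := inv' i hi.
have outer_u : outer_involution M (rcons ns k) (unlink M (partner P)).
  by apply: eq_outer_involution outer' => i hi; rewrite unlink_agree.
have [inv_u _ _ _] := outer_u.
split; first exact: outer_NC12_partition_of.
  rewrite /add_singleton -[RHS](partition_of_partner pP); apply: eq_partition_of => i.
  rewrite ltnS leq_eqVlt => /orP[/eqP ->|hi]; first by rewrite partner_ge ?PM.
  by rewrite /drop_last partner_partition_of // unlink_agree.
rewrite (s1_nfix pP) /drop_last s1_partition_of // nfixS PM eqxx addn1.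
by congr S; apply: eq_nfix => i hi; rewrite unlink_agree.
Qed.

Lemma add_singleton_spec g : outer_NC12 (rcons ns k) g ->
  [/\ outer_NC12 (rcons ns k.+1) (add_singleton g), partner (add_singleton g) M = M,
      drop_last (add_singleton g) = g & s1 (add_singleton g) = (s1 g).+1].
Proof.
case/outer_NC12_partner=> pg outer_g; have [inv _ _ _] := outer_g.
have gM : partner g M = M by rewrite partner_ge.
have outer' := outer_add_fix outer_g gM; have [inv' _ _ _] := outer'.
have agree i : i < M.+1 -> partner (add_singleton g) i = partner g i.
  by move=> hi; rewrite partner_partition_of.
split.
- apply/outer_NC12_partner; split; first exact: pair_partition_of.
  by apply: eq_outer_involution outer' => i hi; rewrite agree.
- by rewrite agree.
- rewrite /drop_last -[RHS](partition_of_partner pg); apply: eq_partition_of => i hi.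
  by have [lt _] := inv i hi; rewrite /unlink agree ?lt // ltnW.
- by rewrite /add_singleton (s1_partition_of inv') (s1_nfix pg) nfixS gM eqxx addn1.
Qed.

Lemma drop_last_paired P : outer_NC12 (rcons ns k.+1) P -> partner P M != M ->
  [/\ outer_NC12 (rcons ns k) (drop_last P), no_singleton_from N (drop_last P),
      0 < s1 (drop_last P), add_pair (drop_last P) = P
    & s1 (drop_last P) = (s1 P).+1].
Proof.
case/outer_NC12_partner=> pP outer_P PM.
have pN := partner_new_lt outer_P PM.
have outer_u := outer_unlink outer_P PM; have [inv_u _ _ _] := outer_u.
have [_ ppM] := (partner_involutive pP) M (ltnSn M).
set p := partner P M in PM pN ppM.
have pM : p < M by apply: leq_trans pN (leq_addr _ _).
have agree i : i < M -> partner (drop_last P) i = unlink M (partner P) i.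
  by move=> hi; rewrite partner_partition_of.
have up : unlink M (partner P) p = p := unlink_partner_new outer_P.
have last_p : last_fix M (partner (drop_last P)) = p.
  apply: last_fix_eq => // [|x px xM]; rewrite agree //.
  exact: unlink_no_fix_above.
have link_agree i : i < M.+1 -> link p M (unlink M (partner P)) i = partner P i.
  rewrite ltnS leq_eqVlt /link => /orP[/eqP ->|hi]; first by rewrite gtn_eqF // eqxx.
  by case: eqP => [->|/eqP ip]; rewrite ?ppM // ltn_eqF // unlinkE.
split.
- exact: outer_NC12_partition_of.
- apply/forallP => x; apply/implyP => Nx; rewrite agree //.
  exact: unlink_no_fix_above (leq_trans pN Nx) _.
- by rewrite /drop_last (s1_partition_of inv_u) (nfix_gt0 pM).
- rewrite /add_pair last_p -[RHS](partition_of_partner pP).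
  apply: eq_partition_of => i hi; rewrite -link_agree //.
  rewrite /link; case: eqP => // _; case: (eqVneq i M) => // iM.
  by rewrite agree // ltn_neqAle iM -ltnS.
- rewrite (s1_nfix pP) /drop_last (s1_partition_of inv_u) -(nfix_link pM up).
  by congr S; apply: eq_nfix => i hi; rewrite link_agree.
Qed.

Lemma add_pair_spec g : outer_NC12 (rcons ns k) g -> no_singleton_from N g -> 0 < s1 g ->
  [/\ outer_NC12 (rcons ns k.+1) (add_pair g), partner (add_pair g) M != M,
      drop_last (add_pair g) = g & (s1 (add_pair g)).+1 = s1 g].
Proof.
case/outer_NC12_partner=> pg outer_g nosing pos; rewrite (s1_nfix pg) in pos *.
have [lM lfix labove] := last_fixP pos.
set p := last_fix M (partner g) in lM lfix labove.
have pN : p < N.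
  by move/forallP: nosing => /(_ (Ordinal lM)); rewrite /= lfix eqxx implybF -ltnNge.
have outer_l := outer_link outer_g pN lfix labove; have [inv_l _ _ _] := outer_l.
have agree i : i < M.+1 -> partner (add_pair g) i = link p M (partner g) i.
  by move=> hi; rewrite /add_pair partner_partition_of.
split.
- exact: outer_NC12_partition_of.
- by rewrite agree // /link (gtn_eqF lM) eqxx (ltn_eqF lM).
- rewrite /drop_last -[RHS](partition_of_partner pg); apply: eq_partition_of => i hi.
  by rewrite -(unlink_link outer_g lfix hi) /unlink agree // ltnW.
- by rewrite /add_pair (s1_partition_of inv_l) nfix_link.
Qed.

Lemma new_singleton_iff (P : {set {set 'I_M.+1}}) : outer_NC12 (rcons ns k.+1) P ->
  (~~ no_singleton_from N P) = (partner P M == M).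
Proof.
case/outer_NC12_partner=> _ outer_P; rewrite (new_fix_iff outer_P) negb_forall.
by apply: eq_existsb => x; rewrite negb_imply negbK.
Qed.

Variable V : nmodType.
Implicit Type F : nat -> nat -> V.

Lemma sum_new_singleton F :
  (\sum_(P : {set {set 'I_M.+1}} | outer_NC12 (rcons ns k.+1) P && ~~ no_singleton_from N P)
    F (s1 P) (s2 P) =
  \sum_(g : {set {set 'I_M}} | outer_NC12 (rcons ns k) g) F (s1 g).+1 (s2 g))%R.
Proof.
rewrite (eq_bigl (fun P => outer_NC12 (rcons ns k.+1) P && (partner P M == M))); last first.
  by move=> P; case outer_P: (outer_NC12 _ P); rewrite //= new_singleton_iff.
rewrite (reindex_onto add_singleton drop_last) /=; last first.
  by move=> P /andP[outer_P /eqP PM]; case: (drop_last_singleton outer_P PM).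
symmetry; apply: eq_big => [g|g outer_g].
  apply/idP/idP => [outer_g|/andP[/andP[outer_P /eqP PM] /eqP <-]].
    by have [-> -> -> _] := add_singleton_spec outer_g; rewrite !eqxx.
  by case: (drop_last_singleton outer_P PM).
have [outer' _ _ e] := add_singleton_spec outer_g.
have pg := outer_NC12_pair_partition outer_g.
by rewrite e (s2_s1_succ (outer_NC12_pair_partition outer') pg).
Qed.

Lemma sum_new_paired F :
  (\sum_(P : {set {set 'I_M.+1}} | outer_NC12 (rcons ns k.+1) P && no_singleton_from N P)
    F (s1 P) (s2 P) =
  \sum_(g : {set {set 'I_M}} |
         [&& outer_NC12 (rcons ns k) g, no_singleton_from N g & (0 < s1 g)%N])
    F (s1 g).-1 (s2 g).+1)%R.
Proof.
rewrite (eq_bigl (fun P => outer_NC12 (rcons ns k.+1) P && (partner P M != M))); last first.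
  by move=> P; case outer_P: (outer_NC12 _ P); rewrite //= -new_singleton_iff ?negbK.
rewrite (reindex_onto add_pair drop_last) /=; last first.
  by move=> P /andP[outer_P PM]; case: (drop_last_paired outer_P PM).
symmetry; apply: eq_big => [g|g /and3P[outer_g nosing pos]].
  apply/idP/idP => [/and3P[outer_g nosing pos]|/andP[/andP[outer_P PM] /eqP <-]].
    by have [-> -> -> _] := add_pair_spec outer_g nosing pos; rewrite !eqxx.
  by case: (drop_last_paired outer_P PM) => -> -> ->.
have [outer' _ _ e] := add_pair_spec outer_g nosing pos.
have pg := outer_NC12_pair_partition outer_g.
by rewrite -e (s2_s1_pred (outer_NC12_pair_partition outer') pg).
Qed.

End AppendPoint.

Lemma outer_NC12_rcons0 ns (P : {set {set 'I_(sumn ns)}}) :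
  outer_NC12 (rcons ns 0) P = outer_NC12 ns P.
Proof.
apply/idP/idP => /outer_NC12_partner[pP [inv adm ncr nsi]];
  apply/outer_NC12_partner; split => //; split => // i hi ne; have [lt _] := inv i hi.
  by rewrite -same_interval_rcons0 //; apply: adm.
by rewrite same_interval_rcons0 //; apply: adm.
Qed.

Lemma no_singleton_from_empty N (P : {set {set 'I_(N + 0)}}) : no_singleton_from N P.
Proof.
apply/forallP => x; apply/implyP => Nx.
by have := ltn_ord x; lia.
Qed.

Lemma sum_no_singleton_last (V : nmodType) ns k (F : nat -> nat -> V) :
  (\sum_(P : {set {set 'I_(sumn ns + k)}} |
          outer_NC12 (rcons ns k) P && no_singleton_from (sumn ns) P) F (s1 P) (s2 P) =
   \sum_(g : {set {set 'I_(sumn ns + 0)}} | outer_NC12 (rcons ns 0) g && (k <= s1 g)%N)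
      F (s1 g - k)%N (s2 g + k)%N)%R.
Proof.
elim: k F => [|k IH] F.
  apply: eq_big => [P|P _]; first by rewrite no_singleton_from_empty andbT.
  by rewrite subn0 (addn0 (s2 P)).
rewrite addnS sum_new_paired.
rewrite (eq_bigl (fun g => (outer_NC12 (rcons ns k) g && no_singleton_from (sumn ns) g)
  && (0 < s1 g)%N)); last by move=> g; rewrite andbA.
rewrite big_mkcondr /= (IH (fun s e => if (0 < s)%N then F s.-1 e.+1 else 0%R)).
rewrite big_mkcondr [RHS]big_mkcondr; apply: eq_bigr => g _.
case: (ltngtP k (s1 g)) => [lt||->]; rewrite ?subnn ?ltnn //.
by rewrite subn_gt0 lt; congr F; lia.
Qed.

(** * The Chebyshev recursion *)

Section ChebyshevSums.
Variables (R : comNzRingType) (t : R) (ns : seq nat).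
Let N := sumn ns.
Local Open Scope ring_scope.

Definition cheb_weight (s e : nat) : {poly R} := t ^+ e *: Ucheb t s.

Definition cheb_sum k :=
  \sum_(P : {set {set 'I_(N + k)}} | outer_NC12 (rcons ns k) P) cheb_weight (s1 P) (s2 P).

Definition cheb_defect k :=
  \sum_(P : {set {set 'I_(N + k)}} | outer_NC12 (rcons ns k) P && ~~ no_singleton_from N P)
    cheb_weight (s1 P).-1 (s2 P).+1.

Lemma UchebS s : Ucheb t s.+1 = 'X * Ucheb t s - (if s is s'.+1 then t *: Ucheb t s' else 0).
Proof. by case: s => [|s]; rewrite /Ucheb /= ?mulr1 ?subr0 // mul_polyC. Qed.

Lemma cheb_weightS s e :
  cheb_weight s.+1 e = 'X * cheb_weight s e - (if (0 < s)%N then cheb_weight s.-1 e.+1 else 0).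
Proof.
rewrite /cheb_weight UchebS scalerBr scalerAr; congr (_ - _).
by case: s => [|s] /=; rewrite ?scaler0 // scalerA exprSr.
Qed.

(* x U_s = U_(s+1) + t U_(s-1): a singleton at the new point raises s1, while
   pairing the new point with the last old singleton lowers it. *)
Lemma cheb_sumS k : cheb_sum k.+1 = 'X * cheb_sum k - cheb_defect k.
Proof.
rewrite /cheb_sum addnS (bigID (fun P => no_singleton_from N P)) /= addrC.
rewrite sum_new_singleton sum_new_paired.
rewrite (eq_bigr (fun P => 'X * cheb_weight (s1 P) (s2 P) -
  (if (0 < s1 P)%N then cheb_weight (s1 P).-1 (s2 P).+1 else 0))); last first.
  by move=> P _; rewrite cheb_weightS.
rewrite sumrB -mulr_sumr -big_mkcondr /= [X in _ - X](bigID (fun P => no_singleton_from N P)) /=.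
rewrite opprD addrA addrAC [X in _ - X + _](eq_bigl
  (fun g => [&& outer_NC12 (rcons ns k) g, no_singleton_from N g & (0 < s1 g)%N])); last first.
  by move=> g; rewrite -andbA [X in _ && X]andbC.
rewrite subrK; congr (_ - _); apply: eq_bigl => g; case outer_g: (outer_NC12 _ g) => //=.
case nosing: (no_singleton_from _ g); rewrite ?andbF ?andbT //.
by rewrite (singleton_from_s1_gt0 (outer_NC12_pair_partition outer_g) (negbT nosing)).
Qed.

Lemma cheb_defectS k : cheb_defect k.+1 = t *: cheb_sum k.
Proof.
rewrite /cheb_defect addnS (sum_new_singleton _ _ (fun s e => cheb_weight s.-1 e.+1)).
by rewrite scaler_sumr; apply: eq_bigr => P _; rewrite /cheb_weight scalerA exprS.
Qed.

Lemma cheb_defect0 : cheb_defect 0 = 0.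
Proof. by rewrite /cheb_defect big_pred0 // => P; rewrite no_singleton_from_empty andbF. Qed.

Lemma cheb_sum_Ucheb k : cheb_sum k = cheb_sum 0 * Ucheb t k.
Proof.
suff : cheb_sum k = cheb_sum 0 * Ucheb t k /\ cheb_sum k.+1 = cheb_sum 0 * Ucheb t k.+1.
  by case.
elim: k => [|k [IH1 IH2]].
  by rewrite cheb_sumS cheb_defect0 subr0 /Ucheb /= mulr1 mulrC.
split => //; rewrite cheb_sumS cheb_defectS IH1 IH2 (UchebS k.+1).
by rewrite mulrBr mulrCA scalerAr.
Qed.

Lemma cheb_sum0 : cheb_sum 0 =
  \sum_(P : {set {set 'I_N}} | outer_NC12 ns P) cheb_weight (s1 P) (s2 P).
Proof. by rewrite /cheb_sum addn0; apply: eq_bigl => P; rewrite outer_NC12_rcons0. Qed.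

End ChebyshevSums.

Lemma prod_Ucheb_outer_NC12 (R : comNzRingType) (t : R) ns :
  (\prod_(nj <- ns) Ucheb t nj =
    \sum_(P : {set {set 'I_(sumn ns)}} | outer_NC12 ns P) t ^+ s2 P *: Ucheb t (s1 P))%R.
Proof.
elim/last_ind: ns => [|ns k IH].
  rewrite big_nil; have inv0 : involutive_below 0 id by [].
  rewrite (big_pred1 (partition_of 0 id)) => [|P /=]; last first.
    apply/idP/eqP => [outer_P|->]; last by apply: outer_NC12_partition_of; split.
    rewrite -(partition_of_partner (outer_NC12_pair_partition outer_P)).
    exact: eq_partition_of.
  have := s1_add_double_s2 (pair_partition_of inv0).
  rewrite (s1_partition_of inv0) /nfix big_ord0 add0n => /eqP.
  by rewrite muln_eq0 /= => /eqP ->; rewrite scale1r.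
rewrite big_rcons /= IH.
have -> : (\sum_(P : {set {set 'I_(sumn (rcons ns k))}} | outer_NC12 (rcons ns k) P)
    t ^+ s2 P *: Ucheb t (s1 P) = cheb_sum t ns k)%R by rewrite /cheb_sum sumn_rcons.
by rewrite cheb_sum_Ucheb cheb_sum0.
Qed.

Lemma NC2_outer_NC12 ns M (P : {set {set 'I_M}}) :
  NC2 ns P = outer_NC12 ns P && (s1 P == 0%N).
Proof.
rewrite /NC2 /outer_NC12 /NC12 -andbA.
case: (admissible ns P) (noncrossing P) => [] [] //=.
apply/forallP/and3P => [pairs | [/forallP small si0 s10] B].
  have not1 B : B \in P -> #|B| != 1%N by move=> BP; have := pairs B; rewrite BP /= => /eqP ->.
  split.
  - by apply/forallP => B; apply/implyP => BP; have := pairs B; rewrite BP /= => ->; rewrite orbT.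
  - rewrite /si cards_eq0; apply/eqP/setP => B; rewrite !inE.
    by apply/negP => /and3P[BP hB _]; move: (not1 B BP); rewrite hB.
  - rewrite /s1 cards_eq0; apply/eqP/setP => B; rewrite !inE.
    by apply/negP => /andP[BP hB]; move: (not1 B BP); rewrite hB.
apply/implyP => BP; have := small B; rewrite BP /= => /orP[h1|//].
by move: s10; rewrite /s1 cards_eq0 => /eqP/setP/(_ B); rewrite !inE BP h1.
Qed.

(* Pair off the last m points one at a time with the last remaining singleton. *)
Lemma card_NC2_rcons ns m :
  #|[set P : {set {set 'I_(sumn (ns ++ [:: m]))}} | NC2 (ns ++ [:: m]) P]| =
  #|[set P : {set {set 'I_(sumn ns)}} | outer_NC12 ns P && (s1 P == m)]|.
Proof.
rewrite -!sum1_card cats1 sumn_rcons.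
rewrite (eq_bigl (fun P => (outer_NC12 (rcons ns m) P && no_singleton_from (sumn ns) P)
  && (s1 P == 0%N))); last first.
  move=> P; rewrite !inE NC2_outer_NC12; case outer_P: (outer_NC12 _ P) => //=.
  case s10: (s1 P == 0%N); rewrite ?andbF //= andbT; apply/esym/forallP => x.
  apply/implyP => _; apply: contraTneq s10 => fx.
  by rewrite (s1_nfix (outer_NC12_pair_partition outer_P)) -lt0n (nfix_gt0 (ltn_ord x)).
rewrite big_mkcondr /= (@sum_no_singleton_last nat ns m (fun s _ => if s == 0%N then 1 else 0)).
rewrite addn0 -big_mkcondr; apply: eq_bigl => g.
by rewrite inE outer_NC12_rcons0 -andbA subn_eq0 -eqn_leq eq_sym.
Qed.

Lemma prod_Ucheb_NC2 (R : rcfType) (t : R) (ht : (0 < t)%R) ns :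
  (\prod_(nj <- ns) Ucheb t nj =
    \sum_(0 <= m < (sumn ns).+1)
       (Num.sqrt t ^+ (sumn ns - m)
        * (#|[set P : {set {set 'I_(sumn (ns ++ [:: m]))}} | NC2 (ns ++ [:: m]) P]|)%:R)
       *: Ucheb t m)%R.
Proof.
rewrite prod_Ucheb_outer_NC12; set n := sumn ns.
have size_eq (P : {set {set 'I_n}}) : outer_NC12 ns P -> (s1 P + 2 * s2 P = n)%N.
  by move/outer_NC12_pair_partition/s1_add_double_s2.
have s1_le (P : {set {set 'I_n}}) : outer_NC12 ns P -> (s1 P < n.+1)%N.
  move=> outer_P; have e := size_eq P outer_P.
  by rewrite ltnS; apply: leq_trans (leq_addr (2 * s2 P) _) _; rewrite e.
have sqrt_pow (P : {set {set 'I_n}}) : outer_NC12 ns P -> (Num.sqrt t ^+ (n - s1 P) = t ^+ s2 P)%R.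
  move=> outer_P; have e := size_eq P outer_P; have -> : (n - s1 P = 2 * s2 P)%N by lia.
  by rewrite exprM sqr_sqrtr // ltW.
have term m : ((Num.sqrt t ^+ (n - m) *
    (#|[set P : {set {set 'I_(sumn (ns ++ [:: m]))}} | NC2 (ns ++ [:: m]) P]|)%:R)
       *: Ucheb t m =
    \sum_(P : {set {set 'I_n}} | outer_NC12 ns P)
      if s1 P == m then t ^+ s2 P *: Ucheb t m else 0)%R.
  rewrite card_NC2_rcons mulr_natr -scalerMnl -big_mkcondr /= -sumr_const.
  by apply: eq_big => [P|P]; rewrite inE // => /andP[outer_P /eqP <-]; rewrite sqrt_pow.
rewrite (eq_bigr _ (fun m _ => term m)) exchange_big /=; apply: eq_bigr => P outer_P.
rewrite big_mkord (bigD1 (Ordinal (s1_le P outer_P))) //= eqxx.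
by rewrite big1 ?addr0 // => i; rewrite -val_eqE eq_sym => /negbTE ->.
Qed.

Local Open Scope ring_scope.

Theorem mainTheorem9 (R : rcfType) (t : R) (ht : 0 < t) (ns : seq nat) :
  \prod_(nj <- ns) Ucheb t nj =
    \sum_(P : {set {set 'I_(sumn ns)}} | NC12 ns P && (si P == 0%N))
       (t ^+ s2 P) *: Ucheb t (s1 P)
  /\
  \prod_(nj <- ns) Ucheb t nj =
    \sum_(0 <= m < (sumn ns).+1)
       (Num.sqrt t ^+ (sumn ns - m)
        * (#|[set P : {set {set 'I_(sumn (ns ++ [:: m]))}} | NC2 (ns ++ [:: m]) P]|)%:R)
       *: Ucheb t m.
Proof. by split; [exact: prod_Ucheb_outer_NC12 | exact: prod_Ucheb_NC2]. Qed.
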